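(* In the setting of the context, for every unital hermitian cone $N$ on $(K,\ast)$ the following are equivalent: (1) $a_\sigma n^\sigma\in N$ for every $n\in N$ and $\sigma\in G$; (2) $N=M\cap K$ for some unital hermitian cone $M$ on $(D,\ast)$; (3) $N=\lambda^{-1}(L)\cap K$ for some unital hermitian cone $L$ on $(M_n(K),\#)$.
   Context: Let $K/F$ be a finite Galois extension of fields of characteristic $0$ with Galois group $G$, $n=|G|$; write $k^\sigma$ for the image of $k$ under $\sigma$. Let $\Phi$ be a normalized $2$-cocycle and $D=(K/F,\Phi)$ the crossed product: right $K$-vector space with basis $(e_\sigma)_{\sigma\in G}$, $e_{\mathrm{id}}=1$, multiplication $(\sum e_\sigma c_\sigma)(\sum e_\tau d_\tau)=\sum e_{\sigma\tau}\Phi(\sigma,\tau)c_\sigma^\tau d_\tau$. Assume $D$ is a division algebra and $\ast$ an involution on $D$ with $K^\ast\subseteq K$, such that $a_\sigma:=e_\sigma^\ast e_\sigma\in K$ for all $\sigma\in G$ and some unital hermitian cone on $(K,\ast)$ contains all $a_\sigma$. A unital hermitian cone on a ring $R$ with involution $\ast$ is a subset $M\subseteq\{r:r^\ast=r\}$ with $1\in M$, $M+M\subseteq M$, $aMa^\ast\subseteq M$ for all $a\in R$, $M\cap-M=\{0\}$. Let $\lambda\colon D\to M_n(K)$ be the left regular representation, $ae_\tau=\sum_\sigma e_\sigma\lambda(a)_{\sigma\tau}$; for $X=[x_{\sigma\tau}]$ let $X^\ast=[x_{\tau\sigma}^\ast]$, let $A=\mathrm{diag}(a_\sigma)_{\sigma\in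 G}$, and $X^\#=A^{-1}X^\ast A$ (so $\lambda(d^\ast)=\lambda(d)^\#$). *)

From HB Require Import structures.
From mathcomp Require Import all_boot all_order all_algebra all_fingroup.
Set Implicit Arguments. Unset Strict Implicit. Unset Printing Implicit Defensive.
Import Order.TTheory GRing.Theory.
Local Open Scope ring_scope.

Definition unital_hermitian_cone (R : pzRingType) (s : R -> R) (M : R -> Prop) : Prop :=
  [/\ (forall r, M r -> s r = r),
      M 1,
      (forall x y, M x -> M y -> M (x + y)),
      (forall b x, M x -> M (b * x * s b))
    & (forall x, M x -> M (- x) -> x = 0)].

Definition ring_involution (R : nzRingType) (s : R -> R) : Prop :=
  [/\ (forall x y, s (x + y) = s x + s y),
      (forall x y, s (x * y) = s y * s x),
      s 1 = 1
    & (forall x, s (s x) = x)].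

(** Left regular representation lambda : D -> M_n(K), n = |G|, rows/columns
    indexed by enum_val : 'I_#|gT| -> gT; coord d sigma is the coefficient of
    e_sigma in d (as right K-space).  a e_tau = sum_sigma e_sigma lambda(a)_{sigma tau}. *)
Definition lreg (gT : finGroupType) (K : fieldType) (D : nzRingType)
  (e : gT -> D) (coord : D -> gT -> K) (d : D) : 'M[K]_#|gT| :=
  \matrix_(i, j) coord (d * e (enum_val j)) (enum_val i).

Definition sharp (gT : finGroupType) (K : fieldType) (starK : K -> K)
  (a : gT -> K) (X : 'M[K]_#|gT|) : 'M[K]_#|gT| :=
  diag_mx (\row_i (a (enum_val i))^-1) *m (map_mx starK X)^T
    *m diag_mx (\row_i a (enum_val i)).

From HB Require Import structures.
From mathcomp Require Import all_boot all_order all_algebra all_fingroup.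
Set Implicit Arguments. Unset Strict Implicit. Unset Printing Implicit Defensive.
Import GRing.Theory.
Local Open Scope ring_scope.

(* We prove the cycle (1) => (3) => (2) => (1).
   - (2) => (1): if N = M cap K, then a_s n^s = (e s)^* n (e s) lies in M cap K.
   - (3) => (2): lambda is an injective ring morphism sending d^* to
     lambda(d)^#, so the preimage of a cone on (M_n(K), #) is a cone on D.
   - (1) => (3): for A = diag(a_s), the matrices X with X^# = X and
     v^* A X v^T in N for every row vector v form a cone on (M_n(K), #)
     (antisymmetry by polarization, using char K <> 2); since lambda(c) is the
     diagonal matrix diag(c^s), condition (1) says exactly that lambda(c) lies
     in this cone, while evaluating at v = e_1 recovers c. *)

Section Cones.
Variables (R : pzRingType) (s : R -> R) (N : R -> Prop).
Hypothesis coneN : unital_hermitian_cone s N.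

(* A cone contains 0 = 0 * 1 * s 0. *)
Lemma cone0 : N 0.
Proof. by case: coneN => _ N1 _ NC _; have := NC 0 1 N1; rewrite !mul0r. Qed.

Lemma cone_sum (I : finType) (F : I -> R) : (forall i, N (F i)) -> N (\sum_i F i).
Proof.
case: coneN => _ _ NA _ _ NF.
by apply: (big_ind N cone0 NA) => i _; apply: NF.
Qed.

(* For an involutive s, conjugating by c is the same as conjugating by s c. *)
Lemma cone_conj (x c : R) : involutive s -> N x -> N (s c * x * c).
Proof. by case: coneN => _ _ _ NC _ sK Nx; rewrite -{2}[c]sK; apply: NC. Qed.

End Cones.

Lemma cone_preimage (R S : pzRingType) (s : R -> R) (t : S -> S) (f : R -> S)
    (L : S -> Prop) :
  injective f -> f 1 = 1 -> {morph f : x y / x + y} -> {morph f : x y / x * y} ->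
  (forall x, f (s x) = t (f x)) -> unital_hermitian_cone t L ->
  unital_hermitian_cone s (fun x => L (f x)).
Proof.
move=> f_inj f1 fD fM f_s [Lh L1 LA LC Lanti].
have f0 : f 0 = 0 by apply: (addrI (f 0)); rewrite -fD !addr0.
have fN x : f (- x) = - f x by apply/eqP; rewrite -subr_eq0 opprK -fD addNr f0.
split=> [x Lx|||b x Lx|x Lx Lnx].
- by apply: f_inj; rewrite f_s Lh.
- by rewrite f1.
- by move=> x y Lx Ly; rewrite fD; apply: LA.
- by rewrite !fM f_s; apply: LC.
- by apply: f_inj; rewrite f0; apply: Lanti => //; rewrite -fN.
Qed.

Section Involution.
Variables (R : nzRingType) (star : R -> R).
Hypothesis star_inv : ring_involution star.

Lemma star0 : star 0 = 0.
Proof.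
case: star_inv => sD _ _ _.
by apply: (addrI (star 0)); rewrite -sD !addr0.
Qed.

Lemma star_sum (I : finType) (f : I -> R) : star (\sum_i f i) = \sum_i star (f i).
Proof. by case: star_inv => sD _ _ _; apply: (big_morph star sD star0). Qed.

End Involution.

(* An involution of D mapping the image of a field K into itself restricts to
   an involutive ring automorphism of K (K being commutative). *)
Section RestrictedInvolution.
Variables (K : fieldType) (D : nzRingType) (iota : {rmorphism K -> D}).
Variables (star : D -> D) (starK : K -> K).
Hypotheses (star_inv : ring_involution star)
  (star_K : forall c, star (iota c) = iota (starK c)).

Let iota_inj := fmorph_inj iota.

Lemma starK_is_zmod_morphism : zmod_morphism starK.
Proof.
case: star_inv => sD _ _ _ x y; apply: iota_inj.
rewrite rmorphB -!star_K rmorphB sD; congr (_ + _).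
by apply/eqP; rewrite -subr_eq0 opprK -sD addNr star0.
Qed.

Lemma starK_is_monoid_morphism : monoid_morphism starK.
Proof.
case: star_inv => _ sM s1 _; split; first by apply: iota_inj; rewrite -star_K !rmorph1.
move=> x y; apply: iota_inj.
by rewrite !rmorphM -!star_K rmorphM sM !star_K -!rmorphM mulrC.
Qed.

Definition starK_rmorphism : {rmorphism K -> K} :=
  HB.pack starK (GRing.isZmodMorphism.Build K K starK starK_is_zmod_morphism)
    (GRing.isMonoidMorphism.Build K K starK starK_is_monoid_morphism).

Lemma starK_involutive : involutive starK.
Proof. by case: star_inv => _ _ _ ss x; apply: iota_inj; rewrite -!star_K ss. Qed.

End RestrictedInvolution.

Section SharpMatrix.
Variables (K : fieldType) (n : nat) (sK : {rmorphism K -> K}).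
Hypothesis sKK : involutive sK.
Variable w : 'I_n -> K.
Hypotheses (w_nz : forall i, w i != 0) (w_herm : forall i, sK (w i) = w i).

Definition ctmx m p (X : 'M[K]_(m, p)) : 'M[K]_(p, m) := (map_mx sK X)^T.
Definition wmx : 'M[K]_n := diag_mx (\row_i w i).
Definition wmx_inv : 'M[K]_n := diag_mx (\row_i (w i)^-1).
Definition sharpmx (X : 'M[K]_n) : 'M[K]_n := wmx_inv *m ctmx X *m wmx.

Lemma ctmxM m p q (X : 'M[K]_(m, p)) (Y : 'M[K]_(p, q)) :
  ctmx (X *m Y) = ctmx Y *m ctmx X.
Proof. by rewrite /ctmx map_mxM trmx_mul. Qed.

Lemma ctmxK m p (X : 'M[K]_(m, p)) : ctmx (ctmx X) = X.
Proof. by apply/matrixP => i j; rewrite !mxE sKK. Qed.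

Lemma ctmxD m p (X Y : 'M[K]_(m, p)) : ctmx (X + Y) = ctmx X + ctmx Y.
Proof. by apply/matrixP => i j; rewrite !mxE rmorphD. Qed.

Lemma ctmx_diag (d : 'I_n -> K) : (forall i, sK (d i) = d i) ->
  ctmx (diag_mx (\row_i d i)) = diag_mx (\row_i d i).
Proof.
move=> d_herm; apply/matrixP => i j; rewrite !mxE rmorphMn d_herm eq_sym.
by case: (eqVneq i j) => [->|].
Qed.

Lemma ctmx_wmx : ctmx wmx = wmx.
Proof. exact: ctmx_diag. Qed.

Lemma ctmx_wmx_inv : ctmx wmx_inv = wmx_inv.
Proof. by apply: ctmx_diag => i; rewrite fmorphV w_herm. Qed.

Lemma wmx_invK : wmx_inv *m wmx = 1%:M.
Proof.
rewrite mul_diag_mx; apply/matrixP => i j; rewrite !mxE.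
by case: (eqVneq i j) => [->|_]; rewrite ?mulr1n ?mulr0n ?mulr0 ?mulVf.
Qed.

Lemma wmxK : wmx *m wmx_inv = 1%:M.
Proof.
rewrite mul_diag_mx; apply/matrixP => i j; rewrite !mxE.
by case: (eqVneq i j) => [->|_]; rewrite ?mulr1n ?mulr0n ?mulr0 ?mulfV.
Qed.

Lemma sharpmx1 : sharpmx 1%:M = 1%:M.
Proof. by rewrite /sharpmx /ctmx map_mx1 trmx1 mulmx1 wmx_invK. Qed.

Lemma sharpmxD X Y : sharpmx (X + Y) = sharpmx X + sharpmx Y.
Proof. by rewrite /sharpmx ctmxD mulmxDr mulmxDl. Qed.

Lemma sharpmxM X Y : sharpmx (X *m Y) = sharpmx Y *m sharpmx X.
Proof.
rewrite /sharpmx ctmxM !mulmxA.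
by rewrite -[wmx_inv *m ctmx Y *m wmx *m wmx_inv]mulmxA wmxK mulmx1.
Qed.

Lemma sharpmxK X : sharpmx (sharpmx X) = X.
Proof.
rewrite /sharpmx !ctmxM ctmxK ctmx_wmx ctmx_wmx_inv !mulmxA wmx_invK mul1mx.
by rewrite -mulmxA wmx_invK mulmx1.
Qed.

Definition sesq (v u : 'rV[K]_n) (Y : 'M[K]_n) : K := (map_mx sK v *m Y *m u^T) 0 0.

Lemma sesqDl v v' u Y : sesq (v + v') u Y = sesq v u Y + sesq v' u Y.
Proof. by rewrite /sesq map_mxD !mulmxDl mxE. Qed.

Lemma sesqDr v u u' Y : sesq v (u + u') Y = sesq v u Y + sesq v u' Y.
Proof. by rewrite /sesq linearD /= mulmxDr mxE. Qed.

Lemma sesqZl c v u Y : sesq (c *: v) u Y = sK c * sesq v u Y.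
Proof. by rewrite /sesq map_mxZ -!scalemxAl mxE. Qed.

Lemma sesqZr c v u Y : sesq v (c *: u) Y = c * sesq v u Y.
Proof. by rewrite /sesq linearZ /= -scalemxAr mxE. Qed.

Lemma sesq_delta i j Y : sesq (delta_mx 0 i) (delta_mx 0 j) Y = Y i j.
Proof. by rewrite /sesq map_delta_mx trmx_delta -rowE -colE !mxE. Qed.

(* Polarization: in characteristic <> 2, a hermitian matrix whose quadratic
   form vanishes identically is zero. *)
Lemma hermitian_form0 (Y : 'M[K]_n) : (2%:R : K) != 0 ->
  ctmx Y = Y -> (forall v, sesq v v Y = 0) -> Y = 0.
Proof.
move=> two_nz Yh Y0; apply/matrixP => i j; rewrite mxE.
have Y_herm k l : sK (Y l k) = Y k l by rewrite -{2}Yh !mxE.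
have Ydiag k : Y k k = 0 by rewrite -sesq_delta Y0.
have Yc c : c * Y i j + sK c * sK (Y i j) = 0.
  have := Y0 (delta_mx 0 i + c *: delta_mx 0 j).
  rewrite !sesqDl !sesqDr !sesqZl !sesqZr !sesq_delta !Ydiag Y_herm.
  by rewrite !mulr0 add0r addr0.
have Yanti : sK (Y i j) = - Y i j.
  by apply/eqP; rewrite -addr_eq0 addrC; have := Yc 1; rewrite rmorph1 !mul1r => ->.
have [//|Yij_nz] := eqVneq (Y i j) 0.
have sK_id c : sK c = c.
  have := Yc c; rewrite Yanti mulrN -mulrBl => /eqP.
  by rewrite mulf_eq0 (negPf Yij_nz) orbF subr_eq0 => /eqP.
have := Yc 1; rewrite !sK_id !mul1r -mulr2n -mulr_natr => /eqP.
by rewrite mulf_eq0 (negPf Yij_nz) (negPf two_nz).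
Qed.

Definition wform (v : 'rV[K]_n) (X : 'M[K]_n) : K := sesq v v (wmx *m X).

Lemma wformD v X Y : wform v (X + Y) = wform v X + wform v Y.
Proof. by rewrite /wform /sesq mulmxDr mulmxDr mulmxDl mxE. Qed.

Lemma wformN v X : wform v (- X) = - wform v X.
Proof. by rewrite /wform /sesq mulmxN mulmxN mulNmx mxE. Qed.

Lemma wform_congr v B X :
  wform v (B *m X *m sharpmx B) = wform ((sharpmx B *m v^T)^T) X.
Proof.
have map_v : map_mx sK ((sharpmx B *m v^T)^T) = map_mx sK v *m wmx *m B *m wmx_inv.
  rewrite -map_trmx -/(ctmx _) ctmxM /sharpmx !ctmxM ctmxK ctmx_wmx ctmx_wmx_inv.
  by rewrite !mulmxA /ctmx map_trmx trmxK.
rewrite /wform /sesq map_v trmxK !mulmxA -[_ *m wmx_inv *m wmx]mulmxA wmx_invK.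
by rewrite mulmx1.
Qed.

Lemma wform_diag v (d : 'I_n -> K) :
  wform v (diag_mx (\row_i d i)) = \sum_i sK (v 0 i) * (w i * d i) * v 0 i.
Proof.
rewrite /wform /sesq /wmx mulmxA !mul_mx_diag mxE.
by apply: eq_bigr => i _; rewrite !mxE mulrA.
Qed.

Lemma wform_delta k X : wform (delta_mx 0 k) X = w k * X k k.
Proof. by rewrite /wform sesq_delta mul_diag_mx !mxE. Qed.

Lemma wform0 X : (2%:R : K) != 0 -> sharpmx X = X -> (forall v, wform v X = 0) -> X = 0.
Proof.
move=> two_nz Xs X0.
have WXh : ctmx (wmx *m X) = wmx *m X.
  by rewrite ctmxM ctmx_wmx -{2}Xs /sharpmx !mulmxA wmxK mul1mx.
have WX0 := hermitian_form0 two_nz WXh X0.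
by rewrite -[X]mul1mx -wmx_invK -mulmxA WX0 mulmx0.
Qed.

Definition form_cone (N : K -> Prop) (X : 'M[K]_n) : Prop :=
  sharpmx X = X /\ forall v, N (wform v X).

Lemma form_cone_is_cone (N : K -> Prop) : (2%:R : K) != 0 ->
  unital_hermitian_cone sK N -> (forall i, N (w i)) ->
  unital_hermitian_cone sharpmx (form_cone N).
Proof.
move=> two_nz coneN Nw; have [_ _ NA _ Nanti] := coneN.
split=> [X []//|||B X [Xs XN]|X [Xs XN] [_ XNN]].
- split=> [|v]; first exact: sharpmx1.
  have -> : 1 = diag_mx (\row_(i < n) (1 : K)).
    by apply/matrixP => i j; rewrite !mxE.
  rewrite wform_diag; apply: (cone_sum coneN) => i; rewrite mulr1.
  exact: (cone_conj coneN).
- move=> X Y [Xs XN] [Ys YN]; split=> [|v]; first by rewrite sharpmxD Xs Ys.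
  by rewrite wformD; apply: NA.
- rewrite -[B * X * _]/(B *m X *m sharpmx B); split=> [|v]; last by rewrite wform_congr.
  by rewrite sharpmxM [sharpmx (B *m X)]sharpmxM sharpmxK Xs mulmxA.
- apply: (wform0 two_nz Xs) => v; apply: Nanti; first exact: XN.
  by rewrite -wformN.
Qed.

End SharpMatrix.

Section CrossedProduct.
Variables (K : fieldType) (gT : finGroupType) (act : gT -> {rmorphism K -> K}).
Variables (D : nzRingType) (iota : {rmorphism K -> D}) (e : gT -> D).
Variables (Phi : gT -> gT -> K) (coord : D -> gT -> K).
Hypotheses (Phi_nz : forall s t, Phi s t != 0) (e1 : e 1%g = 1)
  (e_mul : forall s t, e s * e t = e (s * t)%g * iota (Phi s t))
  (e_comm : forall c t, iota c * e t = e t * iota (act t c))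
  (coord_span : forall d, d = \sum_(s : gT) e s * iota (coord d s))
  (coord_uniq : forall (c : gT -> K) s,
      coord (\sum_(t : gT) e t * iota (c t)) s = c s).

Lemma coord_sum (I : finType) (f : I -> D) s :
  coord (\sum_i f i) s = \sum_i coord (f i) s.
Proof.
have -> : \sum_i f i = \sum_t e t * iota (\sum_i coord (f i) t).
  under [RHS]eq_bigr => t _ do rewrite rmorph_sum mulr_sumr.
  by rewrite exchange_big /=; apply: eq_bigr => i _; apply: coord_span.
by rewrite coord_uniq.
Qed.

Lemma coordD x y s : coord (x + y) s = coord x s + coord y s.
Proof.
have -> : x + y = \sum_t e t * iota (coord x t + coord y t).
  rewrite {1}(coord_span x) {1}(coord_span y) -big_split /=.
  by apply: eq_bigr => t _; rewrite rmorphD mulrDr.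
by rewrite coord_uniq.
Qed.

Lemma coordMr x c s : coord (x * iota c) s = coord x s * c.
Proof.
have -> : x * iota c = \sum_t e t * iota (coord x t * c).
  by rewrite {1}(coord_span x) mulr_suml; apply: eq_bigr => t _; rewrite rmorphM mulrA.
by rewrite coord_uniq.
Qed.

Lemma coord_e t c s : coord (e t * iota c) s = if s == t then c else 0.
Proof.
have -> : e t * iota c = \sum_u e u * iota (if u == t then c else 0).
  rewrite (bigD1 t) //= eqxx big1 ?addr0 // => u /negPf ->.
  by rewrite rmorph0 mulr0.
by rewrite coord_uniq.
Qed.

Lemma coord_e1 t s : coord (e t) s = if s == t then 1 else 0.
Proof. by rewrite -(mulr1 (e t)) -(rmorph1 iota) coord_e. Qed.

Lemma coord_iota c s : coord (iota c) s = if s == 1%g then c else 0.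
Proof. by rewrite -(mul1r (iota c)) -e1 coord_e. Qed.

(* Basis vectors are nonzero: e s e (s^-1) is a nonzero scalar. *)
Lemma e_neq0 s : e s != 0.
Proof.
apply/eqP => es0; have := e_mul s s^-1%g.
rewrite es0 mul0r mulgV e1 mul1r => /esym/eqP.
by rewrite fmorph_eq0 (negPf (Phi_nz _ _)).
Qed.

Local Notation lam := (lreg e coord).

Lemma lreg1 : lam 1 = 1%:M.
Proof.
apply/matrixP => i j; rewrite !mxE mul1r coord_e1 (inj_eq enum_val_inj).
by case: (i == j).
Qed.

Lemma lregD x y : lam (x + y) = lam x + lam y.
Proof. by apply/matrixP => i j; rewrite !mxE mulrDl coordD. Qed.

Lemma lregM x y : lam (x * y) = lam x *m lam y.
Proof.
apply/matrixP => i j; rewrite !mxE -mulrA {1}(coord_span (y * _)).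
rewrite mulr_sumr coord_sum.
have -> : forall F : gT -> K, \sum_t F t = \sum_(k < #|gT|) F (enum_val k).
  by move=> F; rewrite big_enum_val.
by apply: eq_bigr => k _; rewrite mulrA coordMr !mxE.
Qed.

Lemma lreg_inj : injective lam.
Proof.
move=> x y /matrixP lxy; rewrite (coord_span x) (coord_span y).
apply: eq_bigr => s _; congr (_ * iota _).
by have := lxy (enum_rank s) (enum_rank 1%g); rewrite !mxE !enum_rankK e1 !mulr1.
Qed.

Lemma lreg_iota c : lam (iota c) = diag_mx (\row_i act (enum_val i) c).
Proof.
apply/matrixP => i j; rewrite !mxE e_comm coord_e (inj_eq enum_val_inj).
by case: (eqVneq i j) => [->|_]; rewrite ?eqxx ?mulr1n ?mulr0n.
Qed.

Variables (star : D -> D) (starK : K -> K) (a : gT -> K).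
Hypotheses (star_inv : ring_involution star)
  (star_K : forall c, star (iota c) = iota (starK c))
  (a_def : forall s, star (e s) * e s = iota (a s))
  (D_division : forall x : D, x != 0 -> exists y, x * y = 1 /\ y * x = 1).

Local Notation sK := (starK_rmorphism star_inv star_K).

Lemma a_herm s : starK (a s) = a s.
Proof.
case: star_inv => _ sM _ ss.
by apply: (fmorph_inj iota); rewrite -star_K -a_def sM ss.
Qed.

Lemma a_neq0 s : a s != 0.
Proof.
case: star_inv => _ _ _ ss.
have [y [_ ye]] : exists y, star (e s) * y = 1 /\ y * star (e s) = 1.
  apply: D_division; apply: contraNneq (e_neq0 s) => es0.
  by rewrite -[e s]ss es0 star0.
apply/eqP => as0; have := a_def s; rewrite as0 rmorph0 => /(congr1 (fun z => y * z)).
by rewrite mulr0 mulrA ye mul1r; apply/eqP; apply: e_neq0.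
Qed.

Lemma a1 : a 1%g = 1.
Proof. by apply: (fmorph_inj iota); rewrite -a_def e1 mulr1 rmorph1; case: star_inv. Qed.

Lemma star_e_mul_e s t : exists c, star (e s) * e t = e (s^-1 * t)%g * iota c.
Proof.
have es_esV : e s * e s^-1%g = iota (Phi s s^-1%g) by rewrite e_mul mulgV e1 mul1r.
have phi_nz : act t (Phi s s^-1%g) != 0 by rewrite fmorph_eq0 Phi_nz.
exists (act (s^-1 * t)%g (a s) * Phi s^-1%g t / act t (Phi s s^-1%g)).
have scaled : star (e s) * e t * iota (act t (Phi s s^-1%g)) =
         e (s^-1 * t)%g * iota (act (s^-1 * t)%g (a s) * Phi s^-1%g t).
  rewrite -mulrA -e_comm -es_esV !mulrA a_def -mulrA e_mul mulrA e_comm.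
  by rewrite -mulrA -rmorphM.
rewrite -[LHS]mulr1 -(rmorph1 iota) -(mulfV phi_nz) rmorphM mulrA scaled.
by rewrite -mulrA -rmorphM.
Qed.

Lemma coord1_star_mul y z :
  coord (star y * z) 1%g = \sum_s starK (coord y s) * a s * coord z s.
Proof.
case: star_inv => _ sM _ _.
have -> : star y = \sum_s iota (starK (coord y s)) * star (e s).
  by rewrite {1}(coord_span y) (star_sum star_inv); apply: eq_bigr => s _; rewrite sM star_K.
rewrite {1}(coord_span z) mulr_suml coord_sum; apply: eq_bigr => s _.
rewrite mulr_sumr coord_sum (bigD1 s) //= big1 ?addr0.
  by rewrite mulrA -(mulrA (iota _)) a_def -!rmorphM coord_iota eqxx.
move=> t ts; have [c est] := star_e_mul_e s t.
rewrite mulrA -(mulrA (iota _)) est mulrA e_comm -mulrA -rmorphM -mulrA -rmorphM.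
by rewrite coord_e eq_sym -eq_mulVg1 eq_sym (negPf ts).
Qed.

Lemma coord_star_e_mul s x : coord (star (e s) * x) 1%g = a s * coord x s.
Proof.
have sK1 : starK 1 = 1 := rmorph1 sK.
have sK0 : starK 0 = 0 := rmorph0 sK.
rewrite coord1_star_mul (bigD1 s) //= coord_e1 eqxx sK1 mul1r.
by rewrite big1 ?addr0 // => t /negPf ts; rewrite coord_e1 ts sK0 !mul0r.
Qed.

Lemma sharpE : sharp starK a = sharpmx sK (fun i => a (enum_val i)).
Proof. by []. Qed.

Lemma lreg_star d : lam (star d) = sharp starK a (lam d).
Proof.
case: star_inv => _ sM _ _; apply/matrixP => i j.
rewrite /sharp mul_mx_diag mul_diag_mx !mxE.
apply: (mulfI (a_neq0 (enum_val i))).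
rewrite [RHS]mulrA [in RHS](mulrA (a _)) mulfV ?a_neq0 // mul1r.
rewrite -coord_star_e_mul mulrA -sM coord1_star_mul (bigD1 (enum_val j)) //=.
rewrite coord_e1 eqxx mulr1 big1 ?addr0 // => t /negPf tj.
by rewrite coord_e1 tj mulr0.
Qed.

(* (2) => (1): a cone M on D restricts to a cone on K that is stable under
   n |-> a_s n^s = (e s)^* n (e s). *)
Lemma restricted_cone_stable (M : D -> Prop) (N : K -> Prop) :
  unital_hermitian_cone star M -> (forall c, N c <-> M (iota c)) ->
  forall n s, N n -> N (a s * act s n).
Proof.
case: star_inv => _ _ _ ss [_ _ _ MC _] NM n s /NM Mn; apply/NM.
have := MC (star (e s)) _ Mn.
by rewrite ss -mulrA e_comm mulrA a_def -rmorphM.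
Qed.

Lemma lreg_preimage_cone (L : 'M[K]_#|gT| -> Prop) :
  unital_hermitian_cone (sharp starK a) L ->
  unital_hermitian_cone star (fun d => L (lam d)).
Proof.
apply: cone_preimage; [exact: lreg_inj | exact: lreg1 | exact: lregD |
  exact: lregM | exact: lreg_star].
Qed.

Lemma stable_cone_extends (N : K -> Prop) :
  (2%:R : K) != 0 -> (forall c, act 1%g c = c) ->
  unital_hermitian_cone starK N -> (forall n s, N n -> N (a s * act s n)) ->
  exists L : 'M[K]_#|gT| -> Prop, unital_hermitian_cone (sharp starK a) L /\
            forall c, N c <-> L (lam (iota c)).
Proof.
move=> two_nz act1 coneN Nstable; have [Nh N1 _ _ _] := coneN.
have sKK := starK_involutive star_inv star_K.
have Na s : N (a s) by have := Nstable 1 s N1; rewrite rmorph1 mulr1.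
exists (form_cone sK (fun i => a (enum_val i)) N); split=> [|c].
  by rewrite sharpE; apply: form_cone_is_cone => // i; [exact: a_neq0 | exact: a_herm].
split=> [Nc|[_ Nform]]; first split.
- by rewrite -sharpE -lreg_star star_K Nh.
- move=> v; rewrite lreg_iota wform_diag; apply: (cone_sum coneN) => i.
  exact (cone_conj coneN (v 0 i) sKK (Nstable _ (enum_val i) Nc)).
- have := Nform (delta_mx 0 (enum_rank 1%g)).
  by rewrite wform_delta lreg_iota !mxE eqxx enum_rankK a1 act1 mul1r mulr1n.
Qed.
End CrossedProduct.

Theorem corollary4p3
  (* K of characteristic 0, G = gT a finite group acting faithfully on K by
     field automorphisms k |-> k^sigma (right action); K/F Galois with group G
     where F is the fixed field. *)
  (K : fieldType) (gT : finGroupType) (act : gT -> {rmorphism K -> K})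
  (charK0 : [pchar K] =i pred0)
  (act1 : forall k, act 1%g k = k)
  (actM : forall s t k, act (s * t)%g k = act t (act s k))
  (faithful : forall s, (forall k, act s k = k) -> s = 1%g)
  (* the crossed product D = (K/F, Phi) *)
  (D : nzRingType) (iota : {rmorphism K -> D}) (e : gT -> D)
  (Phi : gT -> gT -> K) (coord : D -> gT -> K)
  (Phi_nz : forall s t, Phi s t != 0)
  (Phi_norm : forall s, Phi 1%g s = 1 /\ Phi s 1%g = 1)
  (Phi_cocycle : forall s t r,
      Phi (s * t)%g r * act r (Phi s t) = Phi s (t * r)%g * Phi t r)
  (e1 : e 1%g = 1)
  (e_mul : forall s t, e s * e t = e (s * t)%g * iota (Phi s t))
  (e_comm : forall c t, iota c * e t = e t * iota (act t c))
  (coord_span : forall d, d = \sum_(s : gT) e s * iota (coord d s))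
  (coord_uniq : forall (c : gT -> K) s,
      coord (\sum_(t : gT) e t * iota (c t)) s = c s)
  (D_division : forall x : D, x != 0 -> exists y, x * y = 1 /\ y * x = 1)
  (* the involution on D, with K^* in K and a_sigma = e_sigma^* e_sigma in K *)
  (star : D -> D) (star_inv : ring_involution star)
  (starK : K -> K) (star_K : forall c, star (iota c) = iota (starK c))
  (a : gT -> K) (a_def : forall s, star (e s) * e s = iota (a s))
  (a_cone : exists M0 : K -> Prop,
      unital_hermitian_cone starK M0 /\ forall s, M0 (a s))
  (* the statement *)
  (N : K -> Prop) (hN : unital_hermitian_cone starK N) :
  let P1 := forall n s, N n -> N (a s * act s n) in
  let P2 := exists M : D -> Prop,
      unital_hermitian_cone star M /\ forall c, N c <-> M (iota c) in
  let P3 := exists L : 'M[K]_#|gT| -> Prop,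
      unital_hermitian_cone (sharp starK a) L /\
      forall c, N c <-> L (lreg e coord (iota c)) in
  (P1 <-> P2) /\ (P2 <-> P3).
Proof.
move=> P1 P2 P3.
have two_nz : (2%:R : K) != 0 by rewrite (pcharf0P K).1.
have P13 : P1 -> P3 := stable_cone_extends Phi_nz e1 e_mul e_comm coord_span
  coord_uniq star_inv star_K a_def D_division two_nz act1 hN.
have P32 : P3 -> P2.
  move=> [L [coneL NL]]; exists (fun d => L (lreg e coord d)); split=> //.
  exact: (lreg_preimage_cone Phi_nz e1 e_mul e_comm coord_span coord_uniq
    star_inv star_K a_def D_division coneL).
have P21 : P2 -> P1.
  by move=> [M [coneM NM]] n s; apply: (restricted_cone_stable e_comm star_inv a_def coneM NM).
split; split=> H.
- exact: P32 (P13 H).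
- exact: P21 H.
- exact: P13 (P21 H).
- exact: P32 H.
Qed.
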